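(* Let $d\ge 1$, $n\ge 1$, and let $\mathbb{K}=\mathbb{Q}=\{h_1,\dots,h_n\}\subset\mathbb{R}^d$ be a set of $n$ pairwise distinct node representations. Consider the GATv2 family of scoring functions $$\mathcal{F}_{\mathrm{GATv2}}=\{e_{a,W,b} : d'\ge 1,\ a\in\mathbb{R}^{d'},\ W\in\mathbb{R}^{d'\times 2d},\ b\in\mathbb{R}^{d'}\},\qquad e_{a,W,b}(h_i,h_j)=a^{\top}\,\mathrm{LeakyReLU}\big(W[\,h_i\,\|\,h_j\,]+b\big),$$ with attention coefficients obtained by softmax normalization over keys. Then this family computes dynamic attention for $\mathbb{K}$ and $\mathbb{Q}$: for every map $\varphi:[n]\to[n]$ there exist parameters such that $e(h_i,h_{\varphi(i)})>e(h_i,h_j)$ (and hence $\alpha_{i\varphi(i)}>\alpha_{ij}$) for all $i\in[n]$ and all $j\neq\varphi(i)$.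
   Context: Here $\|$ denotes vector concatenation, $\mathrm{LeakyReLU}$ is applied coordinatewise with $\mathrm{LeakyReLU}(x)=x$ for $x\ge0$ and $cx$ for $x<0$ with a fixed slope $0<c<1$, and $[n]=\{1,\dots,n\}$. Dynamic scoring: a family $\mathcal{F}$ of functions $\mathbb{R}^d\times\mathbb{R}^d\to\mathbb{R}$ computes dynamic scoring for keys $\{k_1,\dots,k_n\}$ and queries $\{q_1,\dots,q_m\}$ if for every map $\varphi:[m]\to[n]$ there is $f\in\mathcal{F}$ with $f(q_i,k_{\varphi(i)})>f(q_i,k_j)$ for all $i\in[m]$ and all $j\neq\varphi(i)$. A family of attention functions computes dynamic attention if its scoring family computes dynamic scoring, possibly followed by a monotonic normalization such as softmax; the attention coefficients are $\alpha_{ij}=\exp(e(h_i,h_j))/\sum_{j'}\exp(e(h_i,h_{j'}))$. *)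

From mathcomp Require Import all_boot all_order all_algebra.
From mathcomp Require Import reals.
From mathcomp Require Import sequences exp.
Set Implicit Arguments. Unset Strict Implicit. Unset Printing Implicit Defensive.
Import Order.TTheory GRing.Theory Num.Theory.
Local Open Scope ring_scope.

Definition leaky_relu {R : realType} (c x : R) : R := if 0 <= x then x else c * x.

Definition gatv2_score {R : realType} (c : R) (d d' : nat)
  (a : 'cV[R]_d') (W : 'M[R]_(d', d + d)) (b : 'cV[R]_d')
  (x y : 'cV[R]_d) : R :=
  \sum_(k < d') a k ord0 * leaky_relu c ((W *m col_mx x y + b) k ord0).

Definition gatv2_alpha {R : realType} (c : R) (d d' n : nat)
  (a : 'cV[R]_d') (W : 'M[R]_(d', d + d)) (b : 'cV[R]_d')
  (h : 'I_n -> 'cV[R]_d) (i j : 'I_n) : R :=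
  expR (gatv2_score c a W b (h i) (h j)) /
  \sum_(j' < n) expR (gatv2_score c a W b (h i) (h j')).

(** The pairs [(h_i, h_j)] are finitely many distinct points of [R^(2d)], so a
    generic linear functional [P] separates them, with some gap [delta] between
    any two of its values.  A combination [L(t + delta) - 2 L(t) + L(t - delta)]
    of LeakyReLUs is a hat function of [t], equal to [(1 - c) delta] at [0] and
    vanishing for [|t| >= delta].  One GATv2 layer with [3n] hidden units sums
    such hats centred at the [n] target values [P(h_i, h_phi(i))]; its score is
    therefore positive exactly on the target pairs and zero elsewhere, and the
    softmax preserves the order. *)
From mathcomp Require Import all_boot all_order all_algebra.
From mathcomp Require Import reals.
From mathcomp Require Import sequences exp.
From mathcomp Require Import lra ring.
Set Implicit Arguments. Unset Strict Implicit. Unset Printing Implicit Defensive.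
Import Order.TTheory GRing.Theory Num.Theory.
Local Open Scope ring_scope.

Section LinearSeparation.
Variable R : realFieldType.

Definition dotv {D : nat} (w v : 'cV[R]_D) : R := \sum_k w k ord0 * v k ord0.

Lemma dotvDl {D : nat} (w u v : 'cV[R]_D) (e : R) :
  dotv (w + e *: u) v = dotv w v + e * dotv u v.
Proof.
rewrite /dotv mulr_sumr -big_split; apply: eq_bigr => k _.
by rewrite !mxE mulrDl mulrA.
Qed.

Lemma dotvBr {D : nat} (w u v : 'cV[R]_D) : dotv w (u - v) = dotv w u - dotv w v.
Proof. by rewrite /dotv -sumrB; apply: eq_bigr => k _; rewrite !mxE mulrBr. Qed.

Lemma dotvv_neq0 {D : nat} (v : 'cV[R]_D) : v != 0 -> dotv v v != 0.
Proof.
apply: contraNneq => /psumr_eq0P vv0; apply/eqP/matrixP => k j.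
have /eqP := vv0 (fun k _ => sqr_ge0 (v k ord0)) k isT.
by rewrite (ord1 j) mxE mulf_eq0 orbb => /eqP.
Qed.

Lemma addr_mul_neq0 (a b e : R) : b != 0 -> `|a / b| < e -> a + e * b != 0.
Proof.
move=> b0; apply: contraTneq => /eqP; rewrite addr_eq0 => /eqP ->.
by rewrite mulNr mulfK // normrN -leNgt ler_norm.
Qed.

Lemma exists_dotv_avoid {D : nat} (s : seq 'cV[R]_D) :
  {in s, forall v, v != 0} -> exists w, {in s, forall v, dotv w v != 0}.
Proof.
elim: s => [_|u s IHs s0]; first by exists 0.
have [w ws] : exists w, {in s, forall v, dotv w v != 0}.
  by apply: IHs => v vs; apply: s0; rewrite inE vs orbT.
have u0 : u != 0 by apply: s0; rewrite inE eqxx.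
pose e := 1 + \big[Num.max/0]_(v <- u :: s) `|dotv w v / dotv u v|.
exists (w + e *: u) => v vus; rewrite dotvDl.
have [uv0|uv_neq0] := eqVneq (dotv u v) 0.
  rewrite uv0 mulr0 addr0; apply: ws.
  move: vus; rewrite inE => /predU1P [vu|//].
  by move: uv0; rewrite vu => /eqP; rewrite (negbTE (dotvv_neq0 u0)).
apply: addr_mul_neq0 => //; rewrite /e ltr_pwDl //.
exact: le_bigmax_seq 0 v predT _ vus isT.
Qed.

Lemma exists_dotv_injective (T : finType) {D : nat} (z : T -> 'cV[R]_D) :
  injective z -> exists w, injective (fun p => dotv w (z p)).
Proof.
move=> z_inj.
pose s := [seq z pq.1 - z pq.2 | pq in [pred pq : T * T | pq.1 != pq.2]].
have s0 : {in s, forall v, v != 0}.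
  move=> _ /imageP [[p q] /= pq ->]; rewrite subr_eq0.
  by apply: contra pq => /eqP /z_inj ->.
have [w ws] := exists_dotv_avoid s0.
exists w => p q /eqP; rewrite -subr_eq0 -dotvBr; apply: contraTeq => pq.
by apply: ws; apply: (image_f (fun pq => z pq.1 - z pq.2) (x := (p, q))).
Qed.

Lemma exists_gap (T : finType) (f : T -> R) : injective f ->
  exists2 delta : R, 0 < delta & forall p q, p != q -> delta <= `|f p - f q|.
Proof.
move=> f_inj.
exists (\big[Num.min/1]_(pq : T * T | pq.1 != pq.2) `|f pq.1 - f pq.2|).
  apply/bigmin_gtP; split=> // -[p q] /= pq.
  by rewrite normr_gt0 subr_eq0; apply: contra pq => /eqP /f_inj ->.
by move=> p q pq; exact: (bigmin_le_cond _ (P := fun pq => pq.1 != pq.2) (j := (p, q))).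
Qed.

End LinearSeparation.

Section LeakyHat.
Variables (R : realType) (c : R).

Lemma leaky_relu_id (x : R) : 0 <= x -> leaky_relu c x = x.
Proof. by rewrite /leaky_relu => ->. Qed.

Lemma leaky_relu_npos (x : R) : x <= 0 -> leaky_relu c x = c * x.
Proof.
rewrite /leaky_relu le_eqVlt; case: ltgtP => // -> _.
by rewrite mulr0.
Qed.

Definition leaky_hat (delta t : R) : R :=
  leaky_relu c (t + delta) - 2 * leaky_relu c t + leaky_relu c (t - delta).

Lemma leaky_hat0 (delta : R) : 0 <= delta -> leaky_hat delta 0 = (1 - c) * delta.
Proof.
move=> delta0; rewrite /leaky_hat add0r sub0r leaky_relu_id // leaky_relu_id //.
rewrite leaky_relu_npos ?oppr_le0 //; ring.
Qed.

Lemma leaky_hat_out (delta t : R) : 0 <= delta -> delta <= `|t| -> leaky_hat delta t = 0.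
Proof.
move=> delta0; rewrite /leaky_hat; case: (lerP 0 t) => t0.
  by rewrite ger0_norm // => tdelta; rewrite !leaky_relu_id //; lra.
by rewrite ltr0_norm // => tdelta; rewrite !leaky_relu_npos //; lra.
Qed.

Lemma sum_leaky_hat_at (T I : finType) (f : T -> R) (g : I -> T) (delta : R) (i0 : I) :
    0 <= delta -> (forall p q, p != q -> delta <= `|f p - f q|) -> injective g ->
  \sum_i leaky_hat delta (f (g i0) - f (g i)) = (1 - c) * delta.
Proof.
move=> delta0 gap g_inj; rewrite (bigD1 i0) //= subrr leaky_hat0 // big1 ?addr0 //.
move=> i i_neq0; apply: leaky_hat_out => //.
by apply: gap; rewrite (inj_eq g_inj) eq_sym.
Qed.

Lemma sum_leaky_hat_off (T I : finType) (f : T -> R) (g : I -> T) (delta : R) (x : T) :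
    0 <= delta -> (forall p q, p != q -> delta <= `|f p - f q|) -> (forall i, g i != x) ->
  \sum_i leaky_hat delta (f x - f (g i)) = 0.
Proof.
move=> delta0 gap gx; rewrite big1 // => i _.
by apply: leaky_hat_out => //; apply: gap; rewrite eq_sym.
Qed.

End LeakyHat.

Section HatLayer.
Variables (R : realType) (c : R) (d k : nat).

Definition hat_a : 'cV[R]_(k + (k + k)) :=
  col_mx (const_mx 1) (col_mx (const_mx (-2)) (const_mx 1)).

Definition hat_W (w : 'cV[R]_(d + d)) : 'M[R]_(k + (k + k), d + d) :=
  let W0 := \matrix_(i < k, j < d + d) w j ord0 in col_mx W0 (col_mx W0 W0).

Definition hat_b (delta : R) (t : 'I_k -> R) : 'cV[R]_(k + (k + k)) :=
  col_mx (\col_i (delta - t i)) (col_mx (\col_i (- t i)) (\col_i (- delta - t i))).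

Lemma gatv2_score_hat (w : 'cV[R]_(d + d)) (delta : R) (t : 'I_k -> R) (x y : 'cV[R]_d) :
  gatv2_score c hat_a (hat_W w) (hat_b delta t) x y
  = \sum_i leaky_hat c delta (dotv w (col_mx x y) - t i).
Proof.
rewrite /gatv2_score /hat_a /hat_W /hat_b !mul_col_mx !add_col_mx.
rewrite !big_split_ord /= -!big_split.
apply: eq_bigr => i _; rewrite !col_mxEu !col_mxEd !col_mxEu !mxE.
have -> : \sum_j (\matrix_(i < k, j < d + d) w j ord0) i j * col_mx x y j ord0
          = dotv w (col_mx x y) by apply: eq_bigr => j _; rewrite mxE.
have shift u : dotv w (col_mx x y) + (u - t i) = dotv w (col_mx x y) - t i + u.
  by rewrite addrCA addrC.
rewrite /= !shift /leaky_hat; ring.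
Qed.

End HatLayer.

Arguments hat_a {R k}.
Arguments hat_W {R d k}.

Lemma ltr_softmax (R : realType) (n : nat) (F : 'I_n -> R) (j k : 'I_n) :
  F j < F k -> expR (F j) / \sum_l expR (F l) < expR (F k) / \sum_l expR (F l).
Proof.
move=> Fjk; rewrite ltr_pM2r ?ltr_expR // invr_gt0 (bigD1 j) //=.
by rewrite ltr_wpDr ?expR_gt0 // sumr_ge0 // => l _; rewrite ltW ?expR_gt0.
Qed.

Theorem theorem2 (R : realType) (c : R) (hc0 : 0 < c) (hc1 : c < 1)
  (d n : nat) (hd : (1 <= d)%N) (hn : (1 <= n)%N)
  (h : 'I_n -> 'cV[R]_d) (hinj : injective h) :
  forall phi : 'I_n -> 'I_n,
    exists (d' : nat) (a : 'cV[R]_d') (W : 'M[R]_(d', d + d)) (b : 'cV[R]_d'),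
      (1 <= d')%N /\
      (forall i j : 'I_n, j != phi i ->
         gatv2_score c a W b (h i) (h (phi i)) > gatv2_score c a W b (h i) (h j)) /\
      (forall i j : 'I_n, j != phi i ->
         gatv2_alpha c a W b h i (phi i) > gatv2_alpha c a W b h i j).
Proof.
move=> phi.
pose pair_rep (p : 'I_n * 'I_n) := col_mx (h p.1) (h p.2).
have pair_rep_inj : injective pair_rep.
  by move=> [i j] [i' j'] /eq_col_mx [/= /hinj -> /hinj ->].
have [w P_inj] := exists_dotv_injective pair_rep_inj.
set P := fun p => dotv w (pair_rep p) in P_inj.
have [delta delta_gt0 gap] := exists_gap P_inj.
have delta_ge0 := ltW delta_gt0.
have target_inj : injective (fun i => (i, phi i)) by move=> i i' [].
pose t i := P (i, phi i).
exists _, hat_a, (hat_W w), (hat_b delta t).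
have score_lt i j : j != phi i ->
    gatv2_score c hat_a (hat_W w) (hat_b delta t) (h i) (h j)
    < gatv2_score c hat_a (hat_W w) (hat_b delta t) (h i) (h (phi i)).
  move=> j_neq; rewrite !gatv2_score_hat.
  rewrite (sum_leaky_hat_at c i delta_ge0 gap target_inj).
  rewrite (sum_leaky_hat_off c (x := (i, j)) delta_ge0 gap); last first.
    by move=> i'; apply: contra j_neq => /eqP [<- ->].
  by rewrite mulr_gt0 ?subr_gt0.
split; first by rewrite addn_gt0 hn.
by split=> // i j /score_lt; exact: ltr_softmax.
Qed.
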